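(* Let $T$ be a positive integer and $\epsilon = T^{-1/3}$. Consider the forecaster that sets $S_0 = 0$ and, for $t = 1,\ldots,T$, predicts $p_t = 1/2 + \epsilon\cdot\mathrm{sgn}(S_{t-1})$, observes $x_t$, and sets $S_t = S_{t-1} + (x_t - p_t)$. If $x_1,\ldots,x_T$ are independent $\mathrm{Bernoulli}(1/2)$ bits, then $\mathbb{E}[\mathsf{smCE}(x,p)] \le C\,T^{1/3}$ for a universal constant $C$.
   Context: $\mathrm{sgn}(0) = 0$, $\mathrm{sgn}(y)=1$ for $y>0$, $\mathrm{sgn}(y)=-1$ for $y<0$. $\mathsf{smCE}(x,p) = \sup_{f \in \mathcal{F}} \sum_{t=1}^T f(p_t)(x_t - p_t)$, where $\mathcal{F}$ is the family of $1$-Lipschitz functions from $[0,1]$ to $[-1,1]$. *)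

From HB Require Import structures.
From mathcomp Require Import all_boot all_order all_algebra.
From mathcomp Require Import all_classical all_reals all_analysis.
Set Implicit Arguments. Unset Strict Implicit. Unset Printing Implicit Defensive.
Import Order.TTheory GRing.Theory Num.Theory.
Local Open Scope classical_set_scope.
Local Open Scope ring_scope.

Section Defs.
Variable R : realType.

(* bit sequence x_1..x_T, 0-indexed: x t = b_t in {0,1} for t < T *)
Definition bits (T : nat) (b : T.-tuple bool) (t : nat) : R :=
  (nth false b t)%:R.

Fixpoint fc_S (eps : R) (x : nat -> R) (t : nat) : R :=
  match t with
  | 0 => 0
  | t'.+1 => fc_S eps x t' + (x t' - (2^-1 + eps * Num.sg (fc_S eps x t')))
  end.

(* prediction p t = 1/2 + eps * sgn(S t)  (this is p_{t+1} in the paper) *)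
Definition fc_p (eps : R) (x : nat -> R) (t : nat) : R :=
  2^-1 + eps * Num.sg (fc_S eps x t).

(* f : [0,1] -> [-1,1], 1-Lipschitz (values outside [0,1] irrelevant) *)
Definition lip1 (f : R -> R) : Prop :=
  (forall a, 0 <= a <= 1 -> -1 <= f a <= 1) /\
  (forall a b, 0 <= a <= 1 -> 0 <= b <= 1 -> `|f a - f b| <= `|a - b|).

Definition smCE (T : nat) (x p : nat -> R) : R :=
  sup [set s | exists f, lip1 f /\ s = \sum_(t < T) f (p t) * (x t - p t)].

End Defs.

From HB Require Import structures.
From mathcomp Require Import all_boot all_order all_algebra.
From mathcomp Require Import all_classical all_reals all_analysis.
From mathcomp Require Import ring lra.
Set Implicit Arguments. Unset Strict Implicit. Unset Printing Implicit Defensive.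
Import Order.TTheory GRing.Theory Num.Theory.
Local Open Scope classical_set_scope.
Local Open Scope ring_scope.

(* Write sigma_t = sgn S_t, so that p_t = 1/2 + eps sigma_t.  For an admissible f,
     f(p_t) = f(1/2) + [sigma_t = 1] (f(1/2 + eps) - f(1/2))
                     + [sigma_t = -1] (f(1/2 - eps) - f(1/2)),
   and by the Lipschitz condition each increment that occurs is at most eps.  Since
   the residuals x_t - p_t telescope to S_T, the calibration sum is at most
   |S_T| + eps (|M_1| + eps T) + eps (|M_-1| + eps T), where M_sigma is the sum of
   x_t - 1/2 over {t | sigma_t = sigma}, a martingale with E M_sigma^2 <= T/4.
   The walk S is pushed towards 0 at speed eps, so the potential cosh(eps S)
   contracts in expectation, E cosh(eps S_T) = O(1), and E|S_T| = O(1/eps).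
   Altogether E smCE = O(1/eps + 1 + eps^2 T), which is O(T^(1/3)) for eps = T^(-1/3).
   When some p_t leaves [0,1], f is unconstrained there, the set of calibration sums
   is unbounded and [sup] returns its junk value 0, so the bound still holds. *)

Section BitMean.
Variable R : realType.
Implicit Types (n : nat) (F G : seq bool -> R).

Fixpoint Ebits n F : R :=
  if n is n'.+1 then
    (Ebits n' (fun s => F (false :: s)) + Ebits n' (fun s => F (true :: s))) / 2
  else F [::].

Lemma EbitsS n F :
  Ebits n.+1 F = (Ebits n (fun s => F (false :: s)) + Ebits n (fun s => F (true :: s))) / 2.
Proof. by []. Qed.

Lemma sum_tupleS n F :
  \sum_(t : n.+1.-tuple bool) F t =
  \sum_(t : n.-tuple bool) (F (false :: t) + F (true :: t)).
Proof.
rewrite [RHS](eq_bigr (fun t : n.-tuple bool => \sum_(b : bool) F (b :: t))) => [|t _]; last first.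
  by rewrite big_bool addrC.
rewrite pair_big /=.
rewrite (reindex (fun t : n.+1.-tuple bool => (behead_tuple t, thead t))) /=.
  by apply: eq_bigr => t _; rewrite [in LHS](tuple_eta t).
exists (fun p : n.-tuple bool * bool => [tuple of p.2 :: p.1]) => [t _|[t b] _] /=.
  by rewrite -tuple_eta.
by rewrite theadE; congr (_, _); apply: val_inj.
Qed.

Lemma Ebits_tuple n F : (2 ^+ n)^-1 * \sum_(t : n.-tuple bool) F t = Ebits n F.
Proof.
elim: n F => [|n IH] F /=.
  rewrite expr0 invr1 mul1r (eq_bigr (fun _ => F [::])) => [|t _]; last by rewrite tuple0.
  by rewrite sumr_const card_tuple expn0.
rewrite sum_tupleS big_split /= mulrDr -!IH exprS invfM; lra.
Qed.

Lemma eq_Ebits n F G : F =1 G -> Ebits n F = Ebits n G.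
Proof.
elim: n F G => [|n IH] F G FG /=; first exact: FG.
by congr ((_ + _) / 2); apply: IH => s; apply: FG.
Qed.

Lemma ler_Ebits n F G : (forall s, F s <= G s) -> Ebits n F <= Ebits n G.
Proof.
elim: n F G => [|n IH] F G FG /=; first exact: FG.
have := IH _ _ (fun s => FG (false :: s)); have := IH _ _ (fun s => FG (true :: s)).
lra.
Qed.

Lemma EbitsD n F G : Ebits n (fun s => F s + G s) = Ebits n F + Ebits n G.
Proof.
elim: n F G => [|n IH] F G //=.
by rewrite !IH; ring.
Qed.

Lemma EbitsZ n c F : Ebits n (fun s => c * F s) = c * Ebits n F.
Proof.
elim: n F => [|n IH] F //=.
by rewrite !IH; ring.
Qed.

Lemma Ebits_cst n c : Ebits n (fun=> c) = c.
Proof. by elim: n => //= n ->; lra. Qed.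

End BitMean.

Section Cosh.
Variable R : realType.
Implicit Types x y : R.

Definition coshR y := (expR y + expR (- y)) / 2.

Lemma expR_mul1B_le1 y : expR y * (1 - y) <= 1.
Proof.
have := expR_ge1Dx (- y); have := expR_gt0 y; have := expRxMexpNx_1 y.
nra.
Qed.

Lemma coshR_ge1 y : 1 <= coshR y.
Proof. have := expR_ge1Dx y; have := expR_ge1Dx (- y); rewrite /coshR; lra. Qed.

Lemma normr_le_coshR y : `|y| <= 2 * coshR y.
Proof.
have := expR_ge1Dx y; have := expR_ge1Dx (- y).
have := expR_gt0 y; have := expR_gt0 (- y).
by rewrite /coshR; case: (lerP 0 y) => [/ger0_norm|/ltr0_norm] ->; lra.
Qed.

Lemma coshR_mul1B_sqr_le1 y : `|y| <= 1 -> coshR y * (1 - y ^+ 2) <= 1.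
Proof.
rewrite ler_norml => /andP[y1 y2].
have := expR_mul1B_le1 y; have := expR_mul1B_le1 (- y); rewrite opprK.
have := expR_gt0 y; have := expR_gt0 (- y).
rewrite /coshR; nra.
Qed.

Lemma expR_sub_expRN_le x : 0 <= x <= 1 -> expR x - expR (- x) <= 4 * x.
Proof.
move=> /andP[x0 x1].
have g1 := expR_mul1B_le1 (x / 2); have g0 := expR_ge1Dx (x / 2).
have sq : expR x = expR (x / 2) ^+ 2 by rewrite -expRM_natr; congr expR; field.
have := expR_ge1Dx (- x).
rewrite sq; nra.
Qed.

Lemma coshR_half_mul_le1 y : `|y| <= 2 -> coshR (y / 2) * (1 - y ^+ 2 / 4) <= 1.
Proof.
move=> y2; have := coshR_mul1B_sqr_le1 (y := y / 2).
rewrite expr_div_n (_ : 2 ^+ 2 = 4 :> R); last by rewrite expr2; lra.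
by apply; rewrite normrM [`|2^-1|]ger0_norm //; lra.
Qed.

Lemma coshR_half_expRN_sqr_le y : 0 <= y <= 1 ->
  coshR (y / 2) * expR (- y ^+ 2) <= 1 - y ^+ 2 / 3.
Proof.
move=> /andP[y0 y1].
have hc : coshR (y / 2) * (1 - y ^+ 2 / 4) <= 1.
  by apply: coshR_half_mul_le1; rewrite ger0_norm //; lra.
have c0 : 0 <= coshR (y / 2) by have := coshR_ge1 (y / 2); lra.
have he := expR_mul1B_le1 (- y ^+ 2); rewrite opprK in he.
have x0 : 0 <= y ^+ 2 by exact: sqr_ge0.
have x1 : y ^+ 2 <= 1 by rewrite expr_le1.
move: hc c0 he x0 x1; set c := coshR _; set e := expR _; set x := y ^+ 2.
move=> hc c0 he x0 x1.
have ceP : c * e * ((1 - x / 4) * (1 + x)) <= 1.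
  rewrite (_ : c * e * _ = (c * (1 - x / 4)) * (e * (1 + x))); last by ring.
  by apply: mulr_ile1 => //; rewrite ?mulr_ge0 ?expR_ge0 //; lra.
have : 1 <= (1 - x / 3) * ((1 - x / 4) * (1 + x)).
  have : 0 <= x * (1 - x) * (5 - x) by rewrite !mulr_ge0 //; lra.
  nra.
have : 0 < (1 - x / 4) * (1 + x) by nra.
nra.
Qed.

Lemma coshR_half_sinh_sqr_le y : 0 <= y <= 1 ->
  coshR (y / 2) * (expR (y ^+ 2) - expR (- y ^+ 2)) <= 6 * y ^+ 2.
Proof.
move=> /andP[y0 y1].
have hc : coshR (y / 2) * (1 - y ^+ 2 / 4) <= 1.
  by apply: coshR_half_mul_le1; rewrite ger0_norm //; lra.
have c0 : 0 <= coshR (y / 2) by have := coshR_ge1 (y / 2); lra.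
have x0 : 0 <= y ^+ 2 by exact: sqr_ge0.
have x1 : y ^+ 2 <= 1 by rewrite expr_le1.
have hd : expR (y ^+ 2) - expR (- y ^+ 2) <= 4 * y ^+ 2.
  by apply: expR_sub_expRN_le; rewrite x0 x1.
have d0 : 0 <= expR (y ^+ 2) - expR (- y ^+ 2) by rewrite subr_ge0 ler_expR; lra.
move: hc c0 hd d0 x0 x1; set c := coshR _; set d := expR _ - expR _; set x := y ^+ 2.
move=> hc c0 hd d0 x0 x1.
have c43 : c <= 4 / 3.
  have : 0 <= c * (1 - x) by rewrite mulr_ge0 // subr_ge0.
  nra.
nra.
Qed.

End Cosh.

Section Forecaster.
Variables (R : realType) (eps : R).

Definition seq_bits (s : seq bool) : nat -> R := fun t => (nth false s t)%:R.

Definition fc_step (s y : R) : R := s + (y - (2^-1 + eps * Num.sg s)).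

Fixpoint fc_walk (s : R) (x : nat -> R) (t : nat) : R :=
  if t is t'.+1 then fc_step (fc_walk s x t') (x t') else s.

Lemma fc_S_walk x t : fc_S eps x t = fc_walk 0 x t.
Proof. by elim: t => //= t ->. Qed.

Lemma fc_walk_cons s b bs t :
  fc_walk s (seq_bits (b :: bs)) t.+1 = fc_walk (fc_step s b%:R) (seq_bits bs) t.
Proof. by elim: t => //= t ->. Qed.

Definition fc_mart (w : R -> R) s x n :=
  \sum_(t < n) w (fc_walk s x t) * (x t - 2^-1).

Lemma fc_mart_cons w s b bs n :
  fc_mart w s (seq_bits (b :: bs)) n.+1 =
  w s * (b%:R - 2^-1) + fc_mart w (fc_step s b%:R) (seq_bits bs) n.
Proof.
rewrite /fc_mart big_ord_recl; congr (_ + _).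
by apply: eq_bigr => i _; rewrite lift0 fc_walk_cons.
Qed.

Lemma Ebits_fc_mart w n s : Ebits n (fun bs => fc_mart w s (seq_bits bs) n) = 0.
Proof.
elim: n s => [|n IH] s; first by rewrite /= /fc_mart big_ord0.
have E b : Ebits n (fun bs => fc_mart w s (seq_bits (b :: bs)) n.+1) =
    w s * (b%:R - 2^-1).
  under eq_Ebits do rewrite fc_mart_cons.
  by rewrite EbitsD Ebits_cst IH addr0.
by rewrite EbitsS !E /=; field.
Qed.

Lemma Ebits_fc_mart_sqr w n s : (forall v, w v ^+ 2 <= 1) ->
  Ebits n (fun bs => fc_mart w s (seq_bits bs) n ^+ 2) <= n%:R / 4.
Proof.
move=> w1; elim: n s => [|n IH] s.
  by rewrite /= /fc_mart big_ord0 expr0n mul0r.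
have E b : Ebits n (fun bs => fc_mart w s (seq_bits (b :: bs)) n.+1 ^+ 2) <=
    w s ^+ 2 / 4 + n%:R / 4.
  have a2 : (w s * (b%:R - 2^-1)) ^+ 2 = w s ^+ 2 / 4 by case: b => /=; field.
  set a := w s * (b%:R - 2^-1) in a2 *.
  under eq_Ebits do rewrite fc_mart_cons.
  rewrite (@eq_Ebits _ n _ (fun bs => a ^+ 2 + 2 * a * fc_mart w (fc_step s b%:R) (seq_bits bs) n
      + fc_mart w (fc_step s b%:R) (seq_bits bs) n ^+ 2)) => [|bs]; last by rewrite /a; ring.
  rewrite !EbitsD Ebits_cst EbitsZ Ebits_fc_mart mulr0 addr0 a2.
  by rewrite lerD2l IH.
rewrite EbitsS -[n.+1%:R]natr1.
have := E false; have := E true; have := w1 s; lra.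
Qed.

(* The growing exponential y is damped by E2 = e^(-eps^2); the other one, z <= 1,
   grows by at most E1 = e^(eps^2). *)
Lemma drift_pair_le (A c E1 E2 x y z : R) :
  c * E2 <= A -> 0 <= c * (E1 - E2) <= 6 * x -> 0 < y -> 0 < z <= 1 ->
  c * (y * E2 + z * E1) <= A * (y + z) + 6 * x.
Proof. by move=> hA /andP[d0 d6] y0 /andP[z0 z1]; nra. Qed.

Definition fc_pot (s : R) : R := coshR (eps * s).

Hypothesis eps01 : 0 < eps <= 1.

Lemma fc_pot_step_mean s :
  (fc_pot (fc_step s 0) + fc_pot (fc_step s 1)) / 2 =
  coshR (eps / 2) * (expR (eps * s) * expR (- (eps ^+ 2 * Num.sg s)) +
                     expR (- (eps * s)) * expR (eps ^+ 2 * Num.sg s)) / 2.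
Proof.
have ex y : expR (eps * fc_step s y) =
    expR (eps * s) * expR (- (eps ^+ 2 * Num.sg s)) * expR (eps * (y - 2^-1)).
  by rewrite -!expRD; congr expR; rewrite /fc_step; ring.
have exN y : expR (- (eps * fc_step s y)) =
    expR (- (eps * s)) * expR (eps ^+ 2 * Num.sg s) * expR (- (eps * (y - 2^-1))).
  by rewrite -!expRD; congr expR; rewrite /fc_step; ring.
rewrite /fc_pot /coshR !ex !exN.
rewrite (_ : eps * (0 - 2^-1) = - (eps / 2)); last by ring.
rewrite (_ : eps * (1 - 2^-1) = eps / 2); last by field.
rewrite opprK; ring.
Qed.

Lemma fc_pot_drift s :
  (fc_pot (fc_step s 0) + fc_pot (fc_step s 1)) / 2 <=
  (1 - eps ^+ 2 / 3) * fc_pot s + 3 * eps ^+ 2.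
Proof.
have /andP[e0 e1] := eps01; have he : 0 <= eps <= 1 by rewrite ltW.
have hA := coshR_half_expRN_sqr_le he; have hB := coshR_half_sinh_sqr_le he.
have c0 : 0 <= coshR (eps / 2) by have := coshR_ge1 (eps / 2); lra.
have d0 : 0 <= coshR (eps / 2) * (expR (eps ^+ 2) - expR (- eps ^+ 2)).
  by rewrite mulr_ge0 // subr_ge0 ler_expR; have := sqr_ge0 eps; lra.
have hd : 0 <= coshR (eps / 2) * (expR (eps ^+ 2) - expR (- eps ^+ 2)) <= 6 * eps ^+ 2.
  by rewrite d0 hB.
have drift := drift_pair_le hA hd.
have := coshR_ge1 (eps ^+ 2).
rewrite fc_pot_step_mean /fc_pot; set c := coshR (eps / 2) in hA hd c0 drift *; rewrite /coshR.
case: (ltrgtP s 0) => [sn|sp|->].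
- rewrite ltr0_sg // mulrN1 opprK.
  have y1 : 0 < expR (eps * s) <= 1 by rewrite expR_gt0 expR_le1; nra.
  have := drift _ _ (expR_gt0 (- (eps * s))) y1.
  lra.
- rewrite gtr0_sg // mulr1.
  have z1 : 0 < expR (- (eps * s)) <= 1 by rewrite expR_gt0 expR_le1; nra.
  have := drift _ _ (expR_gt0 (eps * s)) z1.
  lra.
- rewrite sgr0 !mulr0 oppr0 expR0; nra.
Qed.

(* 9 is the fixed point of v |-> (1 - eps^2/3) v + 3 eps^2. *)
Lemma Ebits_fc_pot_walk n s :
  Ebits n (fun bs => fc_pot (fc_walk s (seq_bits bs) n)) <=
  (1 - eps ^+ 2 / 3) ^+ n * fc_pot s + 9 * (1 - (1 - eps ^+ 2 / 3) ^+ n).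
Proof.
have /andP[e0 e1] := eps01.
have drift := fc_pot_drift.
set A := 1 - eps ^+ 2 / 3 in drift *.
have A0 : 0 <= A by rewrite /A; nra.
elim: n s => [|n IH] s; first by rewrite /= expr0; lra.
have E b : Ebits n (fun bs => fc_pot (fc_walk s (seq_bits (b :: bs)) n.+1)) <=
    A ^+ n * fc_pot (fc_step s b%:R) + 9 * (1 - A ^+ n).
  by under eq_Ebits do rewrite fc_walk_cons; exact: IH.
have E0 : Ebits n (fun bs => fc_pot (fc_walk s (seq_bits (false :: bs)) n.+1)) <=
    A ^+ n * fc_pot (fc_step s 0) + 9 * (1 - A ^+ n) := E false.
have E1 : Ebits n (fun bs => fc_pot (fc_walk s (seq_bits (true :: bs)) n.+1)) <=
    A ^+ n * fc_pot (fc_step s 1) + 9 * (1 - A ^+ n) := E true.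
have := ler_wpM2l (exprn_ge0 n A0) (drift s).
rewrite EbitsS [A ^+ n.+1]exprS (_ : 3 * eps ^+ 2 = 9 * (1 - A)); last by rewrite /A; field.
move: E0 E1 (exprn_ge0 n A0); move: (A ^+ n) => a E0 E1 a0.
nra.
Qed.

Lemma Ebits_abs_fc_walk n :
  Ebits n (fun bs => `|fc_walk 0 (seq_bits bs) n|) <= 18 / eps.
Proof.
have /andP[e0 e1] := eps01.
have pot_le : Ebits n (fun bs => fc_pot (fc_walk 0 (seq_bits bs) n)) <= 9.
  have := Ebits_fc_pot_walk n 0.
  rewrite /fc_pot mulr0 /coshR oppr0 expR0.
  have A0 : 0 <= 1 - eps ^+ 2 / 3 by nra.
  have := exprn_ge0 n A0; lra.
apply: (le_trans (@ler_Ebits _ n _ (fun bs => 2 / eps * fc_pot (fc_walk 0 (seq_bits bs) n)) _)).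
  move=> bs; rewrite /fc_pot; set S := fc_walk _ _ _.
  have := normr_le_coshR (eps * S); rewrite normrM gtr0_norm // => h.
  by rewrite mulrAC ler_pdivlMr // mulrC.
rewrite EbitsZ mulrAC ler_pM2r ?invr_gt0 //; lra.
Qed.

End Forecaster.

Arguments seq_bits {R} s t.

Section SmoothCalibration.
Variable R : realType.

Lemma sup_le_of_ubound (E : set R) B : 0 <= B ->
  (has_ubound E -> ubound E B) -> sup E <= B.
Proof.
move=> B0 EB; case: (pselect (has_sup E)) => [[E0 Eub]|/sup_out ->] //.
by apply: ge_sup => //; exact: EB.
Qed.

Definition calib_sums T (x p : nat -> R) :=
  [set s | exists f, lip1 f /\ s = \sum_(t < T) f (p t) * (x t - p t)].

Lemma calib_sums_unbounded T x p t0 :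
  (forall t, 0 <= x t <= 1) -> (t0 < T)%N -> ~ (0 <= p t0 <= 1) ->
  ~ has_ubound (calib_sums T x p).
Proof.
move=> x01 t0T pt0 [M ubM]; set q := p t0.
have [c c_pos] : exists c : R, forall t, 0 < c * (x t - q).
  case: (ltP q 0) => q0; first by exists 1 => t; have := x01 t; lra.
  have q1 : 1 < q by rewrite ltNge; apply/negP => q1; apply: pt0; rewrite q0.
  by exists (-1) => t; have := x01 t; lra.
set D := \sum_(t < T) (if p t == q then c * (x t - q) else 0).
have D_gt0 : 0 < D.
  rewrite /D (bigD1 (Ordinal t0T)) //= eqxx ltr_pwDl //.
  by apply: sumr_ge0 => t _; case: ifP => // _; exact: ltW.
set k := (`|M| + 1) / D.
have lip : lip1 (fun a => if a == q then c * k else 0).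
  have a_neq a : 0 <= a <= 1 -> (a == q) = false.
    by move=> a01; apply/negbTE/eqP => aq; apply: pt0; rewrite -/q -aq.
  split=> [a a01 | a b a01 b01]; first by rewrite a_neq //; lra.
  by rewrite !a_neq // subrr normr0.
have := ubM _ (ex_intro _ _ (conj lip erefl)).
rewrite (_ : \sum_(t < T) _ = k * D).
  by rewrite /k divfK ?gt_eqF //; have := ler_norm M; lra.
rewrite /D mulr_sumr; apply: eq_bigr => t _.
by case: eqP => [->|_]; [ring | rewrite !mul0r mulr0].
Qed.

End SmoothCalibration.

Section PathwiseBound.
Variables (R : realType) (eps : R) (T : nat) (x : nat -> R).
Hypothesis eps_gt0 : 0 < eps.

Definition sg_ind (sigma v : R) : R := (Num.sg v == sigma)%:R.

Local Notation S := (fc_walk eps 0 x).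
Local Notation p := (fc_p eps x).

Lemma fc_p_walk t : p t = 2^-1 + eps * Num.sg (S t).
Proof. by rewrite /fc_p fc_S_walk. Qed.

Lemma sum_fc_resid : \sum_(t < T) (x t - p t) = S T.
Proof.
elim: T => [|n IH]; first by rewrite big_ord0.
by rewrite big_ord_recr /= IH fc_p_walk.
Qed.

Lemma fc_term_split f t :
  f (p t) * (x t - p t) =
  f 2^-1 * (x t - p t)
  + (f (2^-1 + eps * 1) - f 2^-1) * (sg_ind 1 (S t) * (x t - p t))
  + (f (2^-1 + eps * -1) - f 2^-1) * (sg_ind (-1) (S t) * (x t - p t)).
Proof.
rewrite /sg_ind [in f (p t)]fc_p_walk.
have [n1 n2 n3 n4] : [/\ (1 == -1 :> R) = false, (-1 == 1 :> R) = false,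
    (0 == 1 :> R) = false & (0 == -1 :> R) = false] by split; apply/eqP; lra.
by case: sgrP => _; rewrite ?eqxx ?n1 ?n2 ?n3 ?n4 /= ?mulr0 ?addr0; ring.
Qed.

Lemma sg_ind_resid sigma t :
  sg_ind sigma (S t) * (x t - p t) =
  sg_ind sigma (S t) * (x t - 2^-1) - eps * sigma * sg_ind sigma (S t).
Proof. by rewrite /sg_ind fc_p_walk; case: eqP => [->|_] /=; ring. Qed.

Lemma sg_ind_term_le f sigma : lip1 f -> `|sigma| = 1 ->
  (forall t, (t < T)%N -> 0 <= p t <= 1) ->
  (f (2^-1 + eps * sigma) - f 2^-1) * \sum_(t < T) sg_ind sigma (S t) * (x t - p t)
    <= eps * (`|fc_mart eps (sg_ind sigma) 0 x T| + eps * T%:R).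
Proof.
move=> [_ f_lip] sigma1 p01.
set Z := \sum_(t < T) _.
have ind01 t : 0 <= sg_ind sigma (S t) <= 1 by rewrite /sg_ind; case: eqP => _ /=; lra.
have Z_le : `|Z| <= `|fc_mart eps (sg_ind sigma) 0 x T| + eps * T%:R.
  rewrite /Z (eq_bigr _ (fun (t : 'I_T) _ => sg_ind_resid sigma t)) sumrB -mulr_sumr.
  apply: (le_trans (ler_normB _ _)); rewrite lerD2l normrM normrM sigma1 mulr1.
  rewrite (gtr0_norm eps_gt0) ler_pM2l // ger0_norm.
    by rewrite -[T in T%:R]card_ord -sumr_const; apply: ler_sum => t _; case/andP: (ind01 t).
  by apply: sumr_ge0 => t _; case/andP: (ind01 t).
have rhs_ge0 : 0 <= eps * (`|fc_mart eps (sg_ind sigma) 0 x T| + eps * T%:R).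
  by apply: mulr_ge0; [exact: ltW | exact: le_trans Z_le].
case: (pselect (exists t : 'I_T, Num.sg (S t) = sigma)) => [[t st]|none].
  have dev_le : `|f (2^-1 + eps * sigma) - f 2^-1| <= eps.
    have := p01 t (ltn_ord t); rewrite fc_p_walk st => pt01.
    apply: (le_trans (f_lip _ _ pt01 _)); first lra.
    by rewrite addrC addKr normrM sigma1 mulr1 gtr0_norm.
  apply: (le_trans (ler_norm _)); rewrite normrM.
  by apply: ler_pM => //; exact: normr_ge0.
rewrite (_ : Z = 0) ?mulr0 // /Z big1 // => t _.
rewrite /sg_ind; case: eqP => [st|_]; last by rewrite mul0r.
by exfalso; apply: none; exists t.
Qed.

Definition fc_calib_bound :=
  `|S T| + eps * (`|fc_mart eps (sg_ind 1) 0 x T| + eps * T%:R)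
         + eps * (`|fc_mart eps (sg_ind (-1)) 0 x T| + eps * T%:R).

Lemma calib_sum_le f : lip1 f -> (forall t, (t < T)%N -> 0 <= p t <= 1) ->
  \sum_(t < T) f (p t) * (x t - p t) <= fc_calib_bound.
Proof.
move=> lf p01.
rewrite (eq_bigr _ (fun (t : 'I_T) _ => fc_term_split f t)) !big_split /= -!mulr_sumr sum_fc_resid.
have h1 := sg_ind_term_le lf (normr1 R) p01.
have hN1 := sg_ind_term_le lf (normrN1 R) p01.
have f12 : `|f 2^-1| <= 1 by rewrite ler_norml; case: lf => /(_ 2^-1) -> //; lra.
have : f 2^-1 * S T <= `|S T|.
  apply: (le_trans (ler_norm _)); rewrite normrM.
  by apply: ler_piMl => //; exact: normr_ge0.
rewrite /fc_calib_bound; lra.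
Qed.

Lemma fc_calib_bound_ge0 : 0 <= fc_calib_bound.
Proof.
have e0 := ltW eps_gt0.
by rewrite /fc_calib_bound !addr_ge0 ?mulr_ge0 ?addr_ge0 ?mulr_ge0.
Qed.

Lemma smCE_fc_le : (forall t, 0 <= x t <= 1) -> smCE T x p <= fc_calib_bound.
Proof.
move=> x01; apply: sup_le_of_ubound; first exact: fc_calib_bound_ge0.
move=> bounded _ [f [lf ->]].
case: (pselect (forall t, (t < T)%N -> 0 <= p t <= 1)) => [p01|].
  exact: calib_sum_le.
move=> /existsNP[t0 /not_implyP[t0T pt0]].
by case: (calib_sums_unbounded x01 t0T pt0).
Qed.

End PathwiseBound.

Lemma normr_le_half_1Dsqr (R : realFieldType) (y : R) : `|y| <= (1 + y ^+ 2) / 2.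
Proof. rewrite -real_normK ?num_real //; have := sqr_ge0 (`|y| - 1); lra. Qed.

Section ExpectedBound.
Variables (R : realType) (eps : R) (T : nat).
Hypothesis eps01 : 0 < eps <= 1.

Lemma Ebits_fc_calib_bound :
  Ebits T (fun bs => fc_calib_bound eps T (seq_bits bs)) <=
  18 / eps + 1 + 9 / 4 * (eps ^+ 2 * T%:R).
Proof.
have /andP[e0 e1] := eps01.
have mart_le sigma bs : eps * `|fc_mart eps (sg_ind sigma) 0 (seq_bits bs) T| <=
    2^-1 + eps ^+ 2 / 2 * fc_mart eps (sg_ind sigma) 0 (seq_bits bs) T ^+ 2.
  have := normr_le_half_1Dsqr (eps * fc_mart eps (sg_ind sigma) 0 (seq_bits bs) T).
  by rewrite normrM gtr0_norm // exprMn; lra.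
apply: (le_trans (@ler_Ebits _ T _ (fun bs =>
    `|fc_walk eps 0 (seq_bits bs) T|
    + (2^-1 + eps ^+ 2 / 2 * fc_mart eps (sg_ind 1) 0 (seq_bits bs) T ^+ 2)
    + (2^-1 + eps ^+ 2 / 2 * fc_mart eps (sg_ind (-1)) 0 (seq_bits bs) T ^+ 2)
    + 2 * (eps ^+ 2 * T%:R)) _)).
  move=> bs; have := mart_le 1 bs; have := mart_le (-1) bs.
  rewrite /fc_calib_bound expr2; lra.
rewrite !EbitsD !Ebits_cst !EbitsZ.
have := Ebits_abs_fc_walk eps01 T.
have ind_sqr (sigma v : R) : sg_ind sigma v ^+ 2 <= 1 by rewrite /sg_ind; case: eqP => _ /=; lra.
have := Ebits_fc_mart_sqr eps T 0 (ind_sqr 1).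
have := Ebits_fc_mart_sqr eps T 0 (ind_sqr (-1)).
have : 0 <= eps ^+ 2 / 2 by rewrite divr_ge0 ?sqr_ge0.
nra.
Qed.

Lemma Ebits_smCE_fc_le :
  Ebits T (fun bs => smCE T (seq_bits bs) (fc_p eps (seq_bits bs))) <=
  18 / eps + 1 + 9 / 4 * (eps ^+ 2 * T%:R).
Proof.
apply: le_trans Ebits_fc_calib_bound; apply: ler_Ebits => bs.
have /andP[e0 _] := eps01.
by apply: smCE_fc_le => // t; rewrite /seq_bits; case: nth => /=; lra.
Qed.

End ExpectedBound.

Theorem lemma8 (R : realType) :
  exists C : R, forall T : nat, (0 < T)%N ->
    let eps : R := (T%:R : R) `^ (- 3^-1) in
    (2 ^+ T)^-1 * \sum_(b : T.-tuple bool)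
        smCE T (@bits R T b) (fc_p eps (@bits R T b))
      <= C * (T%:R : R) `^ 3^-1.
Proof.
exists 22 => T T_gt0 /=; rewrite powRN.
set u := T%:R `^ 3^-1.
have T1 : 1 <= T%:R :> R by rewrite ler1n.
have u3 : u ^+ 3 = T%:R.
  by rewrite -powR_mulrn ?powR_ge0 // -powRrM mulVf ?powRr1 ?ler0n ?pnatr_eq0.
have u1 : 1 <= u by rewrite -(@expr_ge1 _ 3) ?powR_ge0 // u3.
have -> : (2 ^+ T)^-1 * \sum_(b : T.-tuple bool) smCE T (@bits R T b) (fc_p u^-1 (@bits R T b)) =
    Ebits T (fun bs => smCE T (seq_bits bs) (fc_p u^-1 (seq_bits bs))) by rewrite -Ebits_tuple.
have eps01 : 0 < u^-1 <= 1 by rewrite invr_gt0 invf_le1; lra.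
apply: le_trans (Ebits_smCE_fc_le T eps01) _.
rewrite invrK (_ : u^-1 ^+ 2 * T%:R = u); last by rewrite -u3; field; lra.
lra.
Qed.
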